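(* For every topological group $X$ endowed with its left coarse structure, $\mathcal D_<(X)\subset\mathcal S(X)$.
   Context: A coarse space is a pair $(X,\mathcal E)$ of a set and a family of entourages $\varepsilon\subset X\times X$ that contain the diagonal, are symmetric, are (up to containment) closed under composition $\delta\circ\varepsilon=\{(x,z):\exists y\,(x,y)\in\varepsilon,(y,z)\in\delta\}$, and such that any symmetric $\delta$ with $\Delta_X\subset\delta\subset\varepsilon\in\mathcal E$ is in $\mathcal E$. The left coarse structure of a topological group $G$ is the coarse structure with base $\{\{(x,y)\in G^2:x\in yK\}\}$, $K=K^{-1}$ ranging over compact symmetric subsets of $G$ containing the identity. Subsets carry the subspace coarse structure $\{\varepsilon\cap A^2\}$. $B(x,\varepsilon)=\{y:(x,y)\in\varepsilon\}$, $B(A,\varepsilon)=\bigcup_{a\in A}B(a,\varepsilon)$, $\operatorname{mesh}(\mathcal U)=\bigcup_{U\in\mathcal U}U\times U$. $\operatorname{asdim}(X)$ is the least $n\in\omega$ such that for every $\varepsilon\in\mathcal E$ there is a cover $\mathcal U$ of $X$ with $\operatorname{mesh}(\mathcal U)\subset\delta$ for some $\delta\in\mathcal E$ and each $B(x,\varepsilon)$ meeting at most $n+1$ members of $\mathcal U$ ($\infty$ if none). $A$ is large if $B(A,\varepsilon)=X$ for some $\varepsilon\in\mathcal E$; small if $L\setminus A$ is large for every large $L$. $\mathcal S(X)$ is the family of small subsets, $\mathcal D_<(X)=\{A\subset X:\operatorname{asdim}(A)<\operatorname{asdim}(X)\}$. *)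

From HB Require Import structures.
From mathcomp Require Import all_boot all_order all_algebra.
From mathcomp Require Import all_classical all_reals all_analysis.
Set Implicit Arguments. Unset Strict Implicit. Unset Printing Implicit Defensive.
Local Open Scope classical_set_scope.
Local Open Scope card_scope.

(** No separation axiom is assumed. *)
Definition is_topological_group (T : topologicalType)
    (mul : T -> T -> T) (inv : T -> T) (one : T) : Prop :=
  [/\ (forall x y z, mul x (mul y z) = mul (mul x y) z),
      (forall x, mul one x = x),
      (forall x, mul (inv x) x = one),
      continuous (fun p : T * T => mul p.1 p.2) &
      continuous inv].

Definition left_coarse_structure (T : topologicalType)
    (mul : T -> T -> T) (inv : T -> T) (one : T) : set (set (T * T)) :=
  [set eps | [/\ (forall x, eps (x, x)),
     (forall x y, eps (x, y) -> eps (y, x)) &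
     exists K : set T, [/\ compact K, K one, (forall k, K k -> K (inv k)) &
       (forall x y, eps (x, y) -> exists2 k, K k & x = mul y k)]]].

Section Coarse.
Context {X : Type}.
Implicit Types (E : set (set (X * X))) (A L : set X) (eps : set (X * X)).

Definition cball eps (x : X) : set X := [set y | eps (x, y)].
Definition cballS eps A : set X := \bigcup_(a in A) cball eps a.

Definition mesh (U : set (set X)) : set (X * X) :=
  \bigcup_(V in U) (V `*` V).

Definition sub_ent E A : set (set (X * X)) :=
  [set eps `&` (A `*` A) | eps in E].

Definition asdim_le E A (n : nat) : Prop :=
  forall eps, sub_ent E A eps ->
    exists U : set (set X),
      [/\ (forall V, U V -> V `<=` A),
          \bigcup_(V in U) V = A,
          (exists2 del, sub_ent E A del & mesh U `<=` del) &
          (forall x, A x ->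
             [set V | U V /\ V `&` cball eps x !=set0] #<= `I_(n.+1))].

(** asdim(A) as an element of nat + {oo} (None = oo): least n with asdim_le *)
Definition asdim E A : option nat :=
  match pselect (exists n, asdim_le E A n) with
  | left h =>
      Some (ex_minn (P := fun n => `[< asdim_le E A n >])
             (let: ex_intro n hn := h in ex_intro _ n (asboolT hn)))
  | right _ => None
  end.

Definition olt (a b : option nat) : Prop :=
  match a, b with
  | Some m, Some n => (m < n)%N
  | Some _, None => True
  | None, _ => False
  end.

Definition large E A : Prop :=
  exists2 eps, E eps & cballS eps A = setT.
Definition small E A : Prop :=
  forall L, large E L -> large E (L `\` A).

Definition small_sets E : set (set X) := [set A | small E A].
Definition D_lt E : set (set X) := [set A | olt (asdim E A) (asdim E setT)].

End Coarse.

From mathcomp Require Import all_boot all_order all_algebra.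
From mathcomp Require Import all_classical all_reals all_analysis.
From mathcomp Require Import finmap.
Set Implicit Arguments. Unset Strict Implicit. Unset Printing Implicit Defensive.
Local Open Scope classical_set_scope.
Local Open Scope card_scope.

(* If A is not small, there is a large L with L \ A not large, and then every
   compact set C has a left translate x C inside a fixed bounded neighbourhood
   A K0 of A. Choosing such translates x_s for all finite s and an ultrafilter
   U on finite sets containing each {s | p \in s}, the translate x_s p lies
   near A for U-almost all s, and retracting it to a point of A moves it by a
   bounded amount. A uniformly bounded cover of A of multiplicity n + 1 then
   pulls back to the cover of G by the "ultralimits"
   {p | for U-almost all s, f s contains the retraction of x_s p},
   with f ranging over choice functions into the cover; left invariance keeps
   it uniformly bounded and of multiplicity n + 1, so asdim G <= asdim A. *)

Lemma card_le_of_fset (T : choiceType) (S : set T) n :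
  (forall B : {fset T}, [set` B] `<=` S -> (#|` B| <= n)%N) -> S #<= `I_n.
Proof.
move=> Bn; have [finS|infS] := pselect (finite_set S); last first.
  have [B BS ltnB] := infinite_set_fset n.+1 infS.
  by have := Bn B BS; rewrite leqNgt ltnB.
have [k Sk] := finS.
have kn : (k <= n)%N by rewrite -(card_fset_set Sk) Bn // fset_setK.
have [Sk1 _] := (card_eqPle S `I_k).1 Sk.
by apply: (card_le_trans Sk1); rewrite card_le_II.
Qed.

Lemma card_fset_le_inj (T T' : choiceType) (S : set T') n (B : {fset T})
    (g : T -> T') :
  S #<= `I_n -> {in B &, injective g} -> (forall b, b \in B -> S (g b)) ->
  (#|` B| <= n)%N.
Proof.
move=> Sn /card_in_imfsetP/eqP <- gS.
rewrite -[(g @` B)%fset]set_fsetK; apply: geq_card_fset_set.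
apply: card_le_trans Sn; apply: subset_card_le => _ /= /imfsetP[b /= Bb ->].
exact: gS.
Qed.

Lemma exists_ultra_fset_mem (T : choiceType) : exists U : set_system {fset T},
  UltraFilter U /\ forall p, U [set s | p \in s].
Proof.
pose F := filter_from setT (fun S : {fset T} => [set s | (S `<=` s)%fset]).
have FF : Filter F.
  apply: filter_fromT_filter; first by exists fset0.
  by move=> S1 S2; exists (S1 `|` S2)%fset => s /=; rewrite fsubUset => /andP[].
have PF : ProperFilter F by apply: filter_from_proper => S _; exists S => /=.
have [U [UU FU]] := ultraFilterLemma PF.
exists U; split=> // p; apply: FU; exists [fset p]%fset => // s /=.
by rewrite fsub1set.
Qed.

Lemma filter_forall_fset (T : Type) (I : choiceType) (F : set_system T)
    {FF : Filter F} (D : {fset I}) (P : I -> set T) :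
  (forall b, b \in D -> F (P b)) -> F [set t | forall b, b \in D -> P b t].
Proof.
move=> FP; apply: filterS (filter_bigI FF FP) => t DP b Db; exact: DP.
Qed.

Lemma exists_retraction (T : Type) (A : set T) (R : T -> T -> Prop) :
  exists r : T -> T, forall z, (exists2 a, A a & R z a) -> A (r z) /\ R z (r z).
Proof.
have rP z : exists w, (exists2 a, A a & R z a) -> A w /\ R z w.
  have [[a Aa Rza]|N] := pselect (exists2 a, A a & R z a).
    by exists a.
  by exists z => /N.
by have [r rPr] := boolp.choice rP; exists r.
Qed.

Lemma asdim_Some_le (X : Type) (E : set (set (X * X))) (A : set X) m :
  asdim E A = Some m -> asdim_le E A m.
Proof.
rewrite /asdim; case: pselect => // h.
case: ex_minnP => n /asboolP An _ [<-]; exact: An.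
Qed.

Lemma asdim_le_Some (X : Type) (E : set (set (X * X))) (A : set X) m :
  asdim_le E A m -> exists2 m', asdim E A = Some m' & (m' <= m)%N.
Proof.
move=> Am; rewrite /asdim; case: pselect => [h|]; last by case; exists m.
by case: ex_minnP => n _ n_min; exists n => //; apply/n_min/asboolP.
Qed.

Lemma not_olt_asdim (X : Type) (E : set (set (X * X))) (A B : set X) :
  (forall m, asdim_le E A m -> asdim_le E B m) -> ~ olt (asdim E A) (asdim E B).
Proof.
case eA: (asdim E A) => [m|] AB ltAB //.
have [m' eB le_m'm] := asdim_le_Some (AB _ (asdim_Some_le eA)).
by rewrite eB /= ltnNge le_m'm in ltAB.
Qed.

Section TopologicalGroup.
Variables (G : topologicalType) (mul : G -> G -> G) (inv : G -> G) (one : G).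
Hypothesis tg : is_topological_group mul inv one.

Lemma mulgA x y z : mul x (mul y z) = mul (mul x y) z. Proof. by case: tg. Qed.
Lemma mul1g x : mul one x = x. Proof. by case: tg. Qed.
Lemma mulVg x : mul (inv x) x = one. Proof. by case: tg. Qed.
Lemma mulKg x y : mul (inv x) (mul x y) = y.
Proof. by rewrite mulgA mulVg mul1g. Qed.

Lemma mulgV x : mul x (inv x) = one.
Proof.
by rewrite -[LHS](mulKg (inv x)) (mulgA (inv x)) mulVg mul1g mulVg.
Qed.

Lemma mulg1 x : mul x one = x.
Proof. by rewrite -(mulVg x) mulgA mulgV mul1g. Qed.

Lemma invgK x : inv (inv x) = x.
Proof. by rewrite -[LHS]mulg1 -(mulVg x) mulKg. Qed.

Definition setM (C D : set G) : set G := (fun p => mul p.1 p.2) @` (C `*` D).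

Definition symmetrize (C : set G) : set G := C `|` inv @` C `|` [set one].

Definition entK (K : set G) : set (G * G) :=
  [set pq | exists2 k, K k & pq.1 = mul pq.2 k].

Lemma setM_compact C D : compact C -> compact D -> compact (setM C D).
Proof.
have [_ _ _ mul_cont _] := tg.
move=> cC cD; apply: continuous_compact; first exact: continuous_subspaceT.
exact: compact_setX.
Qed.

Lemma symmetrize_compact C : compact C -> compact (symmetrize C).
Proof.
have [_ _ _ _ inv_cont] := tg.
move=> cC; apply: compactU; last exact: compact_set1.
apply: compactU => //; apply: continuous_compact => //.
exact: continuous_subspaceT.
Qed.

Lemma symmetrize_inv C k : symmetrize C k -> symmetrize C (inv k).
Proof.
case=> [[Ck|[c Cc <-]]|->]; first by left; right; exists k.
  by left; left; rewrite invgK.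
by right; rewrite -[inv one]mulg1 mulVg.
Qed.

Lemma entKS K K' : K `<=` K' -> entK K `<=` entK K'.
Proof. by move=> KK' pq [k /KK' K'k e]; exists k. Qed.

Lemma entK_sym K a b :
  (forall k, K k -> K (inv k)) -> entK K (a, b) -> entK K (b, a).
Proof.
move=> Kinv [k Kk /= ->]; exists (inv k); first exact: Kinv.
by rewrite /= -mulgA mulgV mulg1.
Qed.

Lemma entK_trans K L a b c :
  entK K (a, b) -> entK L (b, c) -> entK (setM L K) (a, c).
Proof.
move=> [k Kk /= ->] [l Ll /= ->]; exists (mul l k); first by exists (l, k).
by rewrite mulgA.
Qed.

Lemma entK_mul2l K x p q : entK K (mul x p, mul x q) <-> entK K (p, q).
Proof.
split=> [[k Kk /= e]|[k Kk /= ->]]; exists k => //=; last by rewrite mulgA.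
by rewrite -(mulKg x p) e -mulgA mulKg.
Qed.

Lemma left_coarse_entK C :
  compact C -> left_coarse_structure mul inv one (entK (symmetrize C)).
Proof.
move=> cC; split.
- by move=> x; exists one; [right|rewrite mulg1].
- by move=> x y; apply: entK_sym; exact: symmetrize_inv.
- exists (symmetrize C); split=> [||k|x y [k Kk e]].
  + exact: symmetrize_compact.
  + by right.
  + exact: symmetrize_inv.
  + by exists k.
Qed.

Lemma left_coarse_sub_entK eps : left_coarse_structure mul inv one eps ->
  exists K, [/\ compact K, (forall k, K k -> K (inv k)) & eps `<=` entK K].
Proof.
case=> _ _ [K [cK _ Kinv epsK]]; exists K; split => // -[x y] /epsK[k Kk ->].
by exists k.
Qed.

Lemma not_large_translate A L eps0 K0 :
  compact K0 -> (forall k, K0 k -> K0 (inv k)) -> eps0 `<=` entK K0 ->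
  cballS eps0 L = setT ->
  ~ large (left_coarse_structure mul inv one) (L `\` A) ->
  forall C, compact C ->
    exists x, forall c, C c -> exists2 a, A a & entK K0 (mul x c, a).
Proof.
move=> cK0 K0inv eps0K0 Lcov LAsmall C cC.
pose K := symmetrize (setM C K0).
have [x xfar] : exists x, ~ cballS (entK K) (L `\` A) x.
  apply: contrapT => LAcov; apply: LAsmall; exists (entK K).
    exact/left_coarse_entK/setM_compact.
  apply/seteqP; split=> // y _; apply: contrapT => Ny.
  by apply: LAcov; exists y.
exists x => c Cc.
have [l Ll /eps0K0 lxc] : cballS eps0 L (mul x c) by rewrite Lcov.
exists l; last exact: entK_sym.
apply: contrapT => NAl; apply: xfar; exists l => //.
case: lxc => k0 K0k0 /= ->; exists (mul c k0); last by rewrite /= mulgA.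
by left; left; exists (c, k0).
Qed.

Section UltraTranslates.
Variables (A K0 : set G) (r : G -> G).
Hypotheses (cK0 : compact K0) (K0inv : forall k, K0 k -> K0 (inv k)).

Definition retracts z := A (r z) /\ entK K0 (z, r z).

Variables (I : Type) (U : set_system I) (x : I -> G).
Hypothesis U_ultra : UltraFilter U.
Hypothesis retracts_ae : forall p, U [set i | retracts (mul (x i) p)].

Definition lift (f : I -> set G) : set G :=
  [set p | U [set i | f i (r (mul (x i) p))]].

Lemma lift_eq f g : U [set i | f i = g i] -> lift f = lift g.
Proof.
move=> Ufg; apply/seteqP; split=> p Up.
all: apply: filterS (filterI Ufg Up) => i [/= fg].
  by rewrite fg.
by rewrite -fg.
Qed.

Lemma lift_cover (UA : set (set G)) : \bigcup_(V in UA) V = A ->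
  forall p, exists2 f, (forall i, UA (f i)) & lift f p.
Proof.
move=> UAcov p.
have [V0 UAV0] : exists V0, UA V0.
  have [i [Ar _]] := filter_ex (retracts_ae one).
  by move: Ar; rewrite -UAcov => -[V UAV _]; exists V.
have fP i : exists V, UA V /\ (A (r (mul (x i) p)) -> V (r (mul (x i) p))).
  have [Ar|NA] := pselect (A (r (mul (x i) p))).
    by move: Ar; rewrite -{1}UAcov => -[V UAV Vr]; exists V.
  by exists V0; split=> // /NA.
have [f {}fP] := boolp.choice fP.
exists f; first by move=> i; have [] := fP i.
by apply: filterS (retracts_ae p) => i [Ar _]; have [_] := fP i; apply.
Qed.

Lemma lift_mesh (UA : set (set G)) D f p q :
  mesh UA `<=` entK D -> (forall i, UA (f i)) -> lift f p -> lift f q ->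
  entK (setM (setM K0 D) K0) (p, q).
Proof.
move=> meshD fUA fp fq.
have [i [[[_ xprp] [_ xqrq]] [fip fiq]]] :=
  filter_ex (filterI (filterI (retracts_ae p) (retracts_ae q)) (filterI fp fq)).
have rprq : entK D (r (mul (x i) p), r (mul (x i) q)).
  by apply: meshD; exists (f i).
apply/(entK_mul2l _ (x i)); apply: entK_trans xprp _; apply: entK_trans rprq _.
exact: entK_sym.
Qed.

Lemma lift_multiplicity (UA : set (set G)) Ke K' e n p :
  e `<=` entK Ke -> setM (setM K0 Ke) K0 `<=` K' ->
  (forall a, A a ->
     [set V | UA V /\ V `&` cball (entK K' `&` (A `*` A)) a !=set0] #<= `I_n) ->
  [set V | (exists2 f, (forall i, UA (f i)) & lift f = V) /\
           V `&` cball (e `&` (setT `*` setT)) p !=set0] #<= `I_n.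
Proof.
move=> eKe KK' multA; apply: card_le_of_fset => B BS.
have fqP V : exists fq : (I -> set G) * G, V \in B ->
    [/\ forall i, UA (fq.1 i), lift fq.1 = V, V fq.2 & e (p, fq.2)].
  have [VB|NVB] := boolP (V \in B); last by exists (fun=> set0, p).
  have [[f fUA <-] [q [fq [epq _]]]] := BS V VB.
  by exists (f, q).
have [fq {}fqP] := boolp.choice fqP.
pose f V := (fq V).1; pose q V := (fq V).2.
have f_ae_neq V W : V \in B -> W \in B -> V != W -> U [set i | f V i != f W i].
  move=> VB WB; apply: contraNP => NU.
  have [/lift_eq|Uneq] := in_ultra_setVsetC [set i | f V i = f W i] U_ultra.
    by have [_ -> _ _] := fqP V VB; have [_ -> _ _] := fqP W WB => ->.
  by exfalso; apply: NU; apply: filterS Uneq => i /= /eqP.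
have [i [[Arp xprp] ae]] : exists i, retracts (mul (x i) p) /\
  forall V, V \in B ->
    (retracts (mul (x i) (q V)) /\ f V i (r (mul (x i) (q V)))) /\
    forall W, W \in B -> V != W -> f V i != f W i.
  apply: (@filter_ex _ U).
  apply: filterI (retracts_ae p) (filter_forall_fset _) => V VB.
  have [_ fqV qV _] := fqP V VB.
  apply: filterI (filterI (retracts_ae (q V)) _) (filter_forall_fset _).
    by move: qV; rewrite -{1}fqV.
  move=> W WB; have [<-|VW] := eqVneq V W; first by apply: filterS filterT.
  by apply: filterS (f_ae_neq V W VB WB VW).
apply: (card_fset_le_inj (g := f^~ i) (multA _ Arp)).
  move=> V W VB WB fVW; apply/eqP; apply: contraT => VW.
  by have := (ae V VB).2 W WB VW; rewrite fVW eqxx.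
move=> V VB; have [[[Arq xqrq] fVi] _] := ae V VB.
have [fUA _ _ epq] := fqP V VB.
split; first exact: fUA.
exists (r (mul (x i) (q V))); split=> //; split; last by split.
apply: entKS KK' _ _; apply: entK_trans (entK_sym K0inv xprp) _.
apply: entK_trans _ xqrq; apply/entK_mul2l; exact: eKe.
Qed.

Lemma asdim_le_lift m : asdim_le (left_coarse_structure mul inv one) A m ->
  asdim_le (left_coarse_structure mul inv one) setT m.
Proof.
move=> asdimA _ [e Ee <-].
have [Ke [cKe _ eKe]] := left_coarse_sub_entK Ee.
pose K' := symmetrize (setM (setM K0 Ke) K0).
have EK' : left_coarse_structure mul inv one (entK K').
  by apply: left_coarse_entK; do 2![apply: setM_compact => //].
have [UA [_ UAcov [_ [eA EeA <-] meshA] multA]] :=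
  asdimA (entK K' `&` (A `*` A)) (ex_intro2 _ _ _ EK' erefl).
have [D [cD _ eAD]] := left_coarse_sub_entK EeA.
have meshD : mesh UA `<=` entK D by move=> pq /meshA[/eAD].
exists [set V | exists2 f, (forall i, UA (f i)) & lift f = V]; split.
- by [].
- apply/seteqP; split=> // p _; have [f fUA fp] := lift_cover UAcov p.
  by exists (lift f) => //; exists f.
- exists (entK (symmetrize (setM (setM K0 D) K0)) `&` (setT `*` setT)).
    exists (entK (symmetrize (setM (setM K0 D) K0))) => //.
    by apply: left_coarse_entK; do 2![apply: setM_compact => //].
  move=> [p q] [_ [f fUA <-] [/= fp fq]]; split=> //.
  by apply: entKS (lift_mesh meshD fUA fp fq) => k Kk; left; left.
- move=> p _; apply: lift_multiplicity eKe _ multA => k Kk.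
  by left; left.
Qed.

End UltraTranslates.

End TopologicalGroup.

Theorem theorem1p6 (G : topologicalType) (mul : G -> G -> G) (inv : G -> G)
    (one : G) :
  is_topological_group mul inv one ->
  D_lt (left_coarse_structure mul inv one) `<=`
  small_sets (left_coarse_structure mul inv one).
Proof.
move=> tg A DA L [eps0 Eeps0 Lcov]; apply: contrapT => LAsmall.
have [K0 [cK0 K0inv eps0K0]] := left_coarse_sub_entK Eeps0.
have xP (s : {fset G}) : exists x, forall p, p \in s ->
    exists2 a, A a & entK mul K0 (mul x p, a).
  apply: (not_large_translate tg cK0 K0inv eps0K0 Lcov LAsmall).
  exact: (finite_compact (finite_fset s)).
have [x {}xP] := boolp.choice xP.
have [r rP] := exists_retraction A (fun z a => entK mul K0 (z, a)).
have [U [U_ultra Umem]] := exists_ultra_fset_mem G.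
have retracts_ae p : U [set s | retracts mul A K0 r (mul (x s) p)].
  by apply: filterS (Umem p) => s /= /xP/rP.
apply: (not_olt_asdim _ DA) => m.
exact: (asdim_le_lift tg cK0 K0inv U_ultra retracts_ae).
Qed.
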